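(* There exists $\sigma_0>0$ such that for every $\sigma\in(0,\sigma_0)$ and all pairs of integers $(m,n)\ne(m',n')$ with $0\le m\le n$ and $0\le m'\le n'$, one has $\Lambda_{m,n}(\sigma)\neq\Lambda_{m',n'}(\sigma)$. (That is, for small $\sigma>0$ the Robin spectrum of the equilateral triangle has no multiplicities besides the systematic doubling $\Lambda_{m,n}=\Lambda_{n,m}$.)
   Context: Fix $r>0$ (the inradius of an equilateral triangle $T$). For integers $m,n\ge0$ and $\sigma\ge0$, let $(L,M,N)$ with $L\in(-\pi/2,0]$ and $M,N\in[0,\pi/2)$ be the unique solution of the system $$\big(2L-M-N-(m+n)\pi\big)\tan L=3r\sigma,\quad \big(2M-N-L+m\pi\big)\tan M=3r\sigma,\quad \big(2N-L-M+n\pi\big)\tan N=3r\sigma .$$ Set $\mu=\frac{2M-N-L}{\pi}+m$, $\nu=\frac{2N-L-M}{\pi}+n$, and $\Lambda_{m,n}(\sigma)=\frac{4\pi^2}{27r^2}(\mu^2+\mu\nu+\nu^2)$. By McCartin's theorem the Robin spectrum of $T$ (problem $\Delta f+\lambda f=0$ in $T$, $\partial f/\partial n+\sigma f=0$ on $\partial T$) consists of the numbers $\Lambda_{m,n}(\sigma)$, $0\le m\le n$, with $\Lambda_{m,n}$ counted twice for $m<n$ (a symmetric and an antisymmetric eigenfunction) and once for $m=n$; the set $\{\Lambda_{m,n}(\sigma)\}_{0\le m\le n}$ is the desymmetrized spectrum. *)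

From Stdlib Require Import Reals.
Open Scope R_scope.

(* (L,M,N) solves McCartin's Robin system for indices (m,n), parameter sigma,
   inradius r, with L in (-pi/2,0], M,N in [0,pi/2). *)
Definition robin_sys (r sigma : R) (m n : nat) (L M N : R) : Prop :=
  - PI / 2 < L <= 0 /\ 0 <= M < PI / 2 /\ 0 <= N < PI / 2 /\
  (2 * L - M - N - (INR m + INR n) * PI) * tan L = 3 * r * sigma /\
  (2 * M - N - L + INR m * PI) * tan M = 3 * r * sigma /\
  (2 * N - L - M + INR n * PI) * tan N = 3 * r * sigma.

Definition robin_mu (m : nat) (L M N : R) : R := (2 * M - N - L) / PI + INR m.
Definition robin_nu (n : nat) (L M N : R) : R := (2 * N - L - M) / PI + INR n.

Definition robin_Lambda (r : R) (m n : nat) (L M N : R) : R :=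
  let mu := robin_mu m L M N in
  let nu := robin_nu n L M N in
  4 * PI ^ 2 / (27 * r ^ 2) * (mu ^ 2 + mu * nu + nu ^ 2).

(* Write a = -L and k = 3 r sigma / PI.  The system says tan M = k/mu, tan N = k/nu and
   tan a = k/(mu + nu), with PI mu = 2M - N + a + m PI and PI nu = 2N - M + a + n PI, so that
     mu^2 + mu nu + nu^2 = m^2 + m n + n^2 + 3 D / PI^2
   where the defect D = PI (mu M + nu N + (mu + nu) a) - (M^2 + N^2 + a^2 - M N + M a + N a)
   is O(k).  Hence, for small k, equal eigenvalues force equal integers m^2 + m n + n^2 and
   equal defects.  If m = 0 then D <= 3 PI k - PI k / 12, while if m >= 1 the Taylor expansion
   of arctan gives D = 3 PI k - (1 + PI k / 3) S + O(S^2) with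
     S = tan^2 M + tan^2 N + tan^2 a = k^2 Q^2 / W^2,  Q = mu^2 + mu nu + nu^2,  W = mu nu (mu + nu).
   So Q and D determine W up to a tiny error.  But W lies within (m^2 + m n + n^2)/2 of
   the integer m n (m + n), and distinct pairs with the same m^2 + m n + n^2 have values of m n (m + n)
   at least 2 (m^2 + m n + n^2) apart. *)

From Stdlib Require Import Reals Lra Psatz Lia.
Open Scope R_scope.

Lemma PI_bounds : 3 < PI <= 4.
Proof. split; [pose proof PI2_3_2; lra | exact PI_4]. Qed.

Lemma Rabs_le_inv a b : Rabs a <= b -> -b <= a <= b.
Proof. intros H. pose proof (Rle_abs a). pose proof (Rle_abs (-a)). rewrite Rabs_Ropp in *. lra. Qed.

Lemma Rabs_sub_le_of_common_affine U A c S S' e e' : 1 <= c ->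
  Rabs (U - (A - c*S)) <= e -> Rabs (U - (A - c*S')) <= e' -> Rabs (S - S') <= e + e'.
Proof.
  intros Hc H1 H2. apply Rabs_le_inv in H1. apply Rabs_le_inv in H2.
  apply Rabs_le. destruct (Rle_lt_dec S S'); split; nra.
Qed.

Lemma nonneg_of_deriv_nonneg (f f' : R -> R) (t : R) :
  0 <= t -> f 0 = 0 ->
  (forall c, 0 <= c <= t -> derivable_pt_lim f c (f' c)) ->
  (forall c, 0 <= f' c) -> 0 <= f t.
Proof.
  intros Ht Hf0 Hd Hf'. destruct (Req_dec t 0) as [->|Hn]; [lra|].
  destruct (MVT_cor2 f f' 0 t) as [c [Hc _]]; [lra | exact Hd |].
  pose proof (Hf' c). nra.
Qed.

Lemma atan_le_id t : 0 <= t -> atan t <= t.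
Proof.
  intro Ht.
  enough (0 <= t - atan t) by lra.
  apply (nonneg_of_deriv_nonneg (fun x => x - atan x) (fun x => 1 - / (1 + x^2)));
    [exact Ht | cbv beta; rewrite atan_0; ring | |].
  - intros c _. apply derivable_pt_lim_minus;
      [apply derivable_pt_lim_id | apply derivable_pt_lim_atan].
  - intros c. cbv beta. pose proof (pow2_ge_0 c).
    replace (1 - / (1 + c^2)) with (c^2 / (1 + c^2)) by (field; lra).
    apply Rle_mult_inv_pos; lra.
Qed.

Lemma atan_ge_taylor3 t : 0 <= t -> t - t^3/3 <= atan t.
Proof.
  intro Ht.
  enough (0 <= atan t - t + t^3/3) by lra.
  apply (nonneg_of_deriv_nonneg (fun x => atan x - x + x^3/3)
           (fun x => / (1 + x^2) - 1 + x^2));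
    [exact Ht | cbv beta; rewrite atan_0; field | |].
  - intros c _.
    replace (/ (1 + c^2) - 1 + c^2) with (/ (1 + c^2) - 1 + INR 3 * c^(3-1) / 3)
      by (simpl; field; nra).
    apply derivable_pt_lim_plus.
    + apply derivable_pt_lim_minus; [apply derivable_pt_lim_atan | apply derivable_pt_lim_id].
    + apply (derivable_pt_lim_div_scal (fun x => x^3)), derivable_pt_lim_pow.
  - intros c. cbv beta. pose proof (pow2_ge_0 c).
    replace (/ (1 + c^2) - 1 + c^2) with (c^4 / (1 + c^2)) by (field; lra).
    apply Rle_mult_inv_pos; nra.
Qed.

Lemma atan_le_taylor5 t : 0 <= t -> atan t <= t - t^3/3 + t^5/5.
Proof.
  intro Ht.
  enough (0 <= t - t^3/3 + t^5/5 - atan t) by lra.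
  apply (nonneg_of_deriv_nonneg (fun x => x - x^3/3 + x^5/5 - atan x)
           (fun x => 1 - x^2 + x^4 - / (1 + x^2)));
    [exact Ht | cbv beta; rewrite atan_0; field | |].
  - intros c _.
    replace (1 - c^2 + c^4 - / (1 + c^2)) with
      (1 - INR 3 * c^(3-1) / 3 + INR 5 * c^(5-1) / 5 - / (1 + c^2)) by (simpl; field; nra).
    apply derivable_pt_lim_minus; [|apply derivable_pt_lim_atan].
    apply derivable_pt_lim_plus; [apply derivable_pt_lim_minus|].
    + apply derivable_pt_lim_id.
    + apply (derivable_pt_lim_div_scal (fun x => x^3)), derivable_pt_lim_pow.
    + apply (derivable_pt_lim_div_scal (fun x => x^5)), derivable_pt_lim_pow.
  - intros c. cbv beta. pose proof (pow2_ge_0 c).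
    replace (1 - c^2 + c^4 - / (1 + c^2)) with (c^6 / (1 + c^2)) by (field; lra).
    apply Rle_mult_inv_pos; nra.
Qed.

Lemma tan_nonneg x : 0 <= x < PI/2 -> 0 <= tan x.
Proof.
  intros Hx. destruct (Req_dec x 0) as [->|Hx0].
  - rewrite tan_0; lra.
  - left. apply tan_gt_0; lra.
Qed.

Lemma tan_le_inv x y : 0 <= x < PI/2 -> 0 <= y < PI/2 -> tan x <= tan y -> x <= y.
Proof.
  intros Hx Hy Hxy. destruct (Rle_lt_dec x y) as [|Hyx]; [assumption|].
  pose proof (tan_increasing y x ltac:(lra) Hyx ltac:(lra)). lra.
Qed.

Lemma tan_taylor_bounds x : 0 <= x < PI/2 ->
  x <= tan x /\ tan x - tan x ^ 3 / 3 <= x <= tan x - tan x ^ 3 / 3 + tan x ^ 5 / 5.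
Proof.
  intros Hx. pose proof (tan_nonneg x Hx). pose proof PI_bounds.
  assert (Hatan : atan (tan x) = x) by (apply atan_tan; lra).
  set (t := tan x) in *. rewrite <- Hatan.
  split; [|split]; [apply atan_le_id | apply atan_ge_taylor3 | apply atan_le_taylor5]; lra.
Qed.

Definition quad_form (x y : R) : R := x^2 + x*y + y^2.
Definition cubic_form (x y : R) : R := x*y*(x + y).
Definition angle_energy (M N a : R) : R := M^2 + N^2 + a^2 - M*N + M*a + N*a.
Definition angle_pairing (mu nu M N a : R) : R := mu*M + nu*N + (mu + nu)*a.
Definition robin_defect (mu nu M N a : R) : R :=
  PI * angle_pairing mu nu M N a - angle_energy M N a.
Definition sq_slopes (k mu nu : R) : R := (k/mu)^2 + (k/nu)^2 + (k/(mu + nu))^2.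

Lemma angle_energy_sos M N a :
  angle_energy M N a = ((M - N)^2 + (M + a)^2 + (N + a)^2) / 2.
Proof. unfold angle_energy. field. Qed.

Lemma angle_energy_nonneg M N a : 0 <= angle_energy M N a.
Proof.
  rewrite angle_energy_sos.
  pose proof (pow2_ge_0 (M - N)). pose proof (pow2_ge_0 (M + a)). pose proof (pow2_ge_0 (N + a)).
  lra.
Qed.

Lemma angle_energy_le x y z c :
  0 <= x <= c -> 0 <= y <= c -> 0 <= z <= c -> angle_energy x y z <= 5 * c^2.
Proof. intros. unfold angle_energy. nra. Qed.

Lemma angle_energy_perturb t1 t2 t3 d1 d2 d3 :
  0 <= t3 <= t2 -> t2 <= t1 <= 1 ->
  0 <= d1 <= t1^3/3 -> 0 <= d2 <= t1^3/3 -> 0 <= d3 <= t1^3/3 ->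
  Rabs (angle_energy (t1 - d1) (t2 - d2) (t3 - d3) - angle_energy t1 t2 t3) <= 5 * t1^4.
Proof.
  intros Ht32 Ht21 Hd1 Hd2 Hd3.
  replace (angle_energy (t1 - d1) (t2 - d2) (t3 - d3) - angle_energy t1 t2 t3) with
    (angle_energy d1 d2 d3 - ((2*t1 - t2 + t3)*d1 + (2*t2 - t1 + t3)*d2 + (2*t3 + t1 + t2)*d3))
    by (unfold angle_energy; ring).
  pose proof (angle_energy_nonneg d1 d2 d3).
  pose proof (angle_energy_le d1 d2 d3 (t1^3/3) Hd1 Hd2 Hd3).
  assert (0 <= t1^2 <= 1) by nra.
  assert (Hsmall : 5 * (t1^3/3)^2 <= t1^4) by (replace (t1^3) with (t1 * t1^2) by ring; nra).
  assert (Hlin : - (t1 * (t1^3/3)) <= (2*t1 - t2 + t3)*d1 + (2*t2 - t1 + t3)*d2 + (2*t3 + t1 + t2)*d3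
                   <= 12 * t1 * (t1^3/3)) by nra.
  apply Rabs_le. replace (t1^4) with (t1 * t1^3) by ring. lra.
Qed.

Lemma angle_energy_slopes k mu nu : 0 < mu -> 0 < nu ->
  angle_energy (k/mu) (k/nu) (k/(mu + nu)) = sq_slopes k mu nu.
Proof. intros. unfold angle_energy, sq_slopes. field. lra. Qed.

Lemma sq_slopes_quad_cubic k mu nu : 0 < mu -> 0 < nu ->
  sq_slopes k mu nu = k^2 * quad_form mu nu ^ 2 / cubic_form mu nu ^ 2.
Proof. intros. unfold sq_slopes, quad_form, cubic_form. field. lra. Qed.

Lemma quad_form_shift p mu nu M N a m n : p <> 0 ->
  p*mu = 2*M - N + a + m*p -> p*nu = 2*N - M + a + n*p ->
  quad_form mu nu - quad_form m n = 3 * (p * angle_pairing mu nu M N a - angle_energy M N a) / p^2.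
Proof.
  intros Hp Hmu Hnu.
  assert (Hm : m = (p*mu - (2*M - N + a))/p) by (field_simplify_eq; lra).
  assert (Hn : n = (p*nu - (2*N - M + a))/p) by (field_simplify_eq; lra).
  rewrite Hm, Hn. unfold quad_form, angle_pairing, angle_energy. field. exact Hp.
Qed.

Lemma slope_term_bounds mu t x k : 0 < mu -> mu * t = k ->
  t - t^3/3 <= x <= t - t^3/3 + t^5/5 ->
  k - k*t^2/3 <= mu*x <= k - k*t^2/3 + k*t^4/5.
Proof. intros Hmu <- Hx. nra. Qed.

Lemma cubic_form_perturb m n x y k : 1 <= m <= n -> 0 <= x <= k -> -k <= y <= k -> k <= 1/100 ->
  Rabs (cubic_form (m + x) (n + y) - cubic_form m n) <= quad_form m n / 2.
Proof.
  intros Hm Hx Hy Hk. unfold cubic_form, quad_form.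
  replace ((m + x) * (n + y) * (m + x + (n + y)) - m * n * (m + n)) with
    (x * (2*m*n + n^2) + y * (m^2 + 2*m*n) + x^2 * n + y^2 * m + 2*x*y*(m + n) + x*y*(x + y))
    by ring.
  assert (Hmn : 0 <= m * n) by nra.
  assert (Hfirst : Rabs (x * (2*m*n + n^2) + y * (m^2 + 2*m*n)) <= 2 * k * (m^2 + m*n + n^2)).
  { assert (0 <= x * (2*m*n + n^2) <= k * (2*m*n + n^2))
      by (split; [apply Rmult_le_pos | apply Rmult_le_compat_r]; nra).
    assert (-k * (m^2 + 2*m*n) <= y * (m^2 + 2*m*n) <= k * (m^2 + 2*m*n))
      by (split; apply Rmult_le_compat_r; nra).
    assert (0 <= k * (m - n)^2) by (apply Rmult_le_pos; nra).
    apply Rabs_le. nra. }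
  assert (Hsecond : Rabs (x^2 * n + y^2 * m + 2*x*y*(m + n) + x*y*(x + y))
                    <= 6 * k^2 * (m^2 + m*n + n^2)).
  { assert (Hxy : -k^2 <= x * y <= k^2) by (split; nra).
    assert (0 <= x^2 * n <= k^2 * n) by (split; [|apply Rmult_le_compat_r]; nra).
    assert (0 <= y^2 * m <= k^2 * m) by (split; [|apply Rmult_le_compat_r]; nra).
    assert (-(k^2 * (m + n)) <= x * y * (m + n) <= k^2 * (m + n)).
    { rewrite Ropp_mult_distr_l. split; apply Rmult_le_compat_r; lra. }
    assert (-(k^2 * (2*k)) <= x * y * (x + y) <= k^2 * (2*k)) by (split; nra).
    assert (m + n <= m^2 + m*n + n^2) by nra.
    assert (k^3 <= k^2 * (m^2 + m*n + n^2)) by nra.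
    apply Rabs_le. nra. }
  pose proof (Rabs_triang (x * (2*m*n + n^2) + y * (m^2 + 2*m*n))
                          (x^2 * n + y^2 * m + 2*x*y*(m + n) + x*y*(x + y))).
  replace (x * (2*m*n + n^2) + y * (m^2 + 2*m*n) + x^2 * n + y^2 * m + 2*x*y*(m + n) + x*y*(x + y))
    with ((x * (2*m*n + n^2) + y * (m^2 + 2*m*n)) + (x^2 * n + y^2 * m + 2*x*y*(m + n) + x*y*(x + y)))
    by ring.
  assert (HQ : 0 <= m^2 + m*n + n^2) by nra.
  assert (k * (m^2 + m*n + n^2) <= 1/100 * (m^2 + m*n + n^2)) by (apply Rmult_le_compat_r; lra).
  assert (k^2 * (m^2 + m*n + n^2) <= 1/10000 * (m^2 + m*n + n^2))
    by (apply Rmult_le_compat_r; nra).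
  lra.
Qed.

Lemma cubic_gap_sq k Q Q0 W W' :
  0 < k <= 1/100 -> 1 <= Q0 -> 0 < Q <= Q0 + 1/2 -> Q <= 2*W -> W + Q0 <= W' ->
  12 * k^2 * Q^2 * W'^2 < (W'^2 - W^2) * W^2.
Proof.
  intros Hk HQ0 HQ HQW HWW.
  assert (Hk2 : k^2 <= 1/10000) by nra.
  destruct (Rle_lt_dec W' (2*W)) as [Hnear|Hfar].
  - assert (Hdiff : Q0 * W' <= W'^2 - W^2) by nra.
    assert (Q0 * W' * W^2 <= (W'^2 - W^2) * W^2) by nra.
    assert (Q^2 * W' <= 4 * Q * W^2).
    { assert (Q * W' <= Q * (2*W)) by (apply Rmult_le_compat_l; lra).
      assert (Q * Q <= Q * (2*W)) by (apply Rmult_le_compat_l; lra). nra. }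
    assert (k^2 * (Q^2 * W') <= 1/10000 * (4 * Q * W^2))
      by (apply Rmult_le_compat; nra).
    assert (Q * W^2 <= 3/2 * Q0 * W^2) by (apply Rmult_le_compat_r; nra).
    assert (12 * k^2 * Q^2 * W' < Q0 * W^2) by nra.
    assert (12 * k^2 * Q^2 * W' * W' < Q0 * W^2 * W') by (apply Rmult_lt_compat_r; lra).
    replace (12 * k^2 * Q^2 * W'^2) with (12 * k^2 * Q^2 * W' * W') by ring.
    lra.
  - assert (3/4 * W'^2 <= W'^2 - W^2) by nra.
    assert (Q^2 / 4 <= W^2) by nra.
    assert (3/4 * W'^2 * (Q^2 / 4) <= (W'^2 - W^2) * W^2)
      by (apply Rmult_le_compat; nra).
    assert (k^2 * (Q^2 * W'^2) <= 1/10000 * (Q^2 * W'^2)) by (apply Rmult_le_compat_r; nra).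
    assert (0 < Q^2 * W'^2) by (apply Rmult_lt_0_compat; nra).
    lra.
Qed.

Lemma sq_slopes_gap k Q Q0 W W' :
  0 < k <= 1/100 -> 1 <= Q0 -> 0 < Q <= Q0 + 1/2 -> Q <= 2*W -> W + Q0 <= W' ->
  6 * ((k^2*Q^2/W^2)^2 + (k^2*Q^2/W'^2)^2) < k^2*Q^2/W^2 - k^2*Q^2/W'^2.
Proof.
  intros Hk HQ0 HQ HQW HWW.
  pose proof (cubic_gap_sq k Q Q0 W W' Hk HQ0 HQ HQW HWW) as Hgap.
  set (c := k^2*Q^2).
  assert (Hc : 0 < c) by (unfold c; apply Rmult_lt_0_compat; apply pow_lt; lra).
  assert (HW : 0 < W) by lra.
  assert (HS' : (c/W'^2)^2 <= (c/W^2)^2).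
  { apply pow_incr. split; [apply Rle_mult_inv_pos; nra|].
    apply Rmult_le_compat_l; [lra|]. apply Rinv_le_contravar; nra. }
  enough (12 * (c/W^2)^2 < c/W^2 - c/W'^2) by lra.
  replace (c/W^2 - c/W'^2) with (c * ((W'^2 - W^2) * W^2) / (W^4 * W'^2)) by (field; nra).
  replace (12 * (c/W^2)^2) with (c * (12 * c * W'^2) / (W^4 * W'^2)) by (field; nra).
  apply Rmult_lt_compat_r; [apply Rinv_0_lt_compat; nra|].
  apply Rmult_lt_compat_l; [exact Hc|]. unfold c. lra.
Qed.

Open Scope nat_scope.

Lemma eq_of_same_quad_same_sum m n m' n' : m <= n -> m' <= n' ->
  m*m + m*n + n*n = m'*m' + m'*n' + n'*n' -> m + n = m' + n' -> m = m' /\ n = n'.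
Proof.
  intros Hmn Hmn' HQ Hs.
  assert (m*n = m'*n') by nia.
  assert ((n - m)*(n - m) = (n' - m')*(n' - m')) by nia.
  assert (n - m = n' - m') by nia.
  lia.
Qed.

(* Z' - Z = (s' - s) (s'^2 + s s' + s^2 - Q), and both s'^2 and s s' exceed Q. *)
Lemma cubic_gap_of_sum_lt s s' Q Z Z' : s < s' -> Q <= s*s ->
  Z + Q*s = s*s*s -> Z' + Q*s' = s'*s'*s' -> Z + 2*Q <= Z'.
Proof.
  intros Hss' HQs HZ HZ'.
  assert (Q <= s*s') by nia.
  assert (Q <= s'*s') by nia.
  nia.
Qed.

Lemma cubic_gap_of_same_quad m n m' n' : m <= n -> m' <= n' -> (m, n) <> (m', n') ->
  m*m + m*n + n*n = m'*m' + m'*n' + n'*n' ->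
  m*n*(m + n) + 2*(m*m + m*n + n*n) <= m'*n'*(m' + n') \/
  m'*n'*(m' + n') + 2*(m*m + m*n + n*n) <= m*n*(m + n).
Proof.
  intros Hmn Hmn' Hne HQ.
  assert (Hs : m + n <> m' + n').
  { intro Hs. destruct (eq_of_same_quad_same_sum m n m' n' Hmn Hmn' HQ Hs). congruence. }
  assert (HZ : m*n*(m + n) + (m*m + m*n + n*n)*(m + n) = (m + n)*(m + n)*(m + n)) by nia.
  assert (HZ' : m'*n'*(m' + n') + (m*m + m*n + n*n)*(m' + n') = (m' + n')*(m' + n')*(m' + n'))
    by (rewrite HQ; nia).
  destruct (Nat.lt_gt_cases (m + n) (m' + n')) as [[Hlt|Hgt] _]; [exact Hs| |].
  - left. apply (cubic_gap_of_sum_lt (m + n) (m' + n')); [assumption|nia|assumption|assumption].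
  - right. apply (cubic_gap_of_sum_lt (m' + n') (m + n)); [assumption|nia|assumption|assumption].
Qed.

Open Scope R_scope.

Lemma INR_eq_of_dist_lt_1 i j : Rabs (INR i - INR j) < 1 -> i = j.
Proof.
  intros H. apply Rabs_def2 in H.
  destruct (Nat.lt_total i j) as [Hij|[Hij|Hij]]; [exfalso| exact Hij | exfalso];
    apply le_INR in Hij; rewrite S_INR in Hij; lra.
Qed.

Lemma quad_form_INR m n : quad_form (INR m) (INR n) = INR (m*m + m*n + n*n).
Proof. unfold quad_form. rewrite !plus_INR, !mult_INR. ring. Qed.

Lemma cubic_form_INR m n : cubic_form (INR m) (INR n) = INR (m*n*(m + n)).
Proof. unfold cubic_form. rewrite !mult_INR, plus_INR. ring. Qed.

Set Implicit Arguments.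

(* [robin_sys] in the unknowns mu = [robin_mu], nu = [robin_nu], a = -L, with k = 3 r sigma / PI;
   the ordering a <= N <= M is forced by m <= n (see [robin_sys_reduced]). *)
Record robin_reduced (k : R) (m n : nat) (mu nu M N a : R) : Prop := {
  reduced_mu : PI * mu = 2*M - N + a + INR m * PI;
  reduced_nu : PI * nu = 2*N - M + a + INR n * PI;
  reduced_tan_M : mu * tan M = k;
  reduced_tan_N : nu * tan N = k;
  reduced_tan_a : (mu + nu) * tan a = k;
  reduced_mu_pos : 0 < mu;
  reduced_mu_le_nu : mu <= nu;
  reduced_a_range : 0 <= a <= N;
  reduced_N_le_M : N <= M;
  reduced_M_lt : M < PI/2 }.

Lemma robin_sys_reduced r sigma m n L M N : 0 < r -> 0 < sigma -> (m <= n)%nat ->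
  robin_sys r sigma m n L M N ->
  robin_reduced (3*r*sigma/PI) m n (robin_mu m L M N) (robin_nu n L M N) M N (-L).
Proof.
  intros Hr Hs Hmn (HL & HM & HN & EL & EM & EN).
  pose proof PI_bounds.
  set (mu := robin_mu m L M N). set (nu := robin_nu n L M N). set (k := 3*r*sigma/PI).
  assert (Emu : PI*mu = 2*M - N + -L + INR m*PI) by (unfold mu, robin_mu; field; lra).
  assert (Enu : PI*nu = 2*N - M + -L + INR n*PI) by (unfold nu, robin_nu; field; lra).
  assert (Hk : 0 < k) by (unfold k; apply Rdiv_lt_0_compat; nra).
  assert (TM : mu * tan M = k).
  { replace (mu * tan M) with (PI * mu * tan M / PI) by (field; lra).
    rewrite Emu. unfold k. rewrite <- EM. field. lra. }
  assert (TN : nu * tan N = k).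
  { replace (nu * tan N) with (PI * nu * tan N / PI) by (field; lra).
    rewrite Enu. unfold k. rewrite <- EN. field. lra. }
  assert (Ta : (mu + nu) * tan (-L) = k).
  { rewrite tan_neg. replace ((mu + nu) * - tan L) with (- (PI * mu + PI * nu) * tan L / PI)
      by (field; lra).
    rewrite Emu, Enu. unfold k. rewrite <- EL. field. lra. }
  pose proof (tan_nonneg M ltac:(lra)). pose proof (tan_nonneg N ltac:(lra)).
  pose proof (tan_nonneg (-L) ltac:(lra)).
  assert (Hmu : 0 < mu) by nra.
  assert (Hnu : 0 < nu) by nra.
  assert (Hmn' : INR m <= INR n) by (apply le_INR; exact Hmn).
  assert (Hmunu : mu <= nu).
  { destruct (Rle_lt_dec mu nu) as [|Hlt]; [assumption | exfalso].
    assert (M <= N) by (apply tan_le_inv; nra). nra. }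
  constructor; try assumption; try lra.
  - split; [lra | apply tan_le_inv; nra].
  - apply tan_le_inv; nra.
Qed.

Section ReducedSolution.

Variables (k : R) (m n : nat) (mu nu M N a : R).
Hypothesis Hsol : robin_reduced k m n mu nu M N a.

Lemma reduced_angle_bounds :
  0 <= a /\ a <= N /\ N <= M /\ 0 <= M < PI/2 /\ 0 <= N < PI/2 /\ 0 <= a < PI/2.
Proof. destruct Hsol as [_ _ _ _ _ _ _ Ha HNM HM]. lra. Qed.

Lemma reduced_slopes : tan M = k/mu /\ tan N = k/nu /\ tan a = k/(mu + nu).
Proof.
  destruct Hsol as [_ _ TM TN Ta Hmu Hmunu _ _ _].
  repeat split; [rewrite <- TM | rewrite <- TN | rewrite <- Ta]; field; lra.
Qed.

Lemma reduced_mu_ge : INR m <= mu.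
Proof.
  destruct Hsol as [Emu _ _ _ _ _ _ Ha HNM _]. pose proof PI_bounds.
  enough (INR m * PI <= mu * PI) by nra. lra.
Qed.

Lemma reduced_mu_ge_1 : (1 <= m)%nat -> 1 <= mu.
Proof. intros Hm. apply le_INR in Hm. pose proof reduced_mu_ge. simpl INR in Hm. lra. Qed.

Lemma reduced_tan_order : 0 <= tan a <= tan N /\ tan N <= tan M.
Proof.
  destruct Hsol as [_ _ TM TN Ta Hmu Hmunu _ _ _]. pose proof reduced_angle_bounds.
  pose proof (tan_nonneg M). pose proof (tan_nonneg N). pose proof (tan_nonneg a).
  assert (tan N <= tan M) by nra.
  repeat split; nra.
Qed.

Lemma reduced_k_nonneg : 0 <= k.
Proof.
  pose proof reduced_tan_order. destruct Hsol as [_ _ TM _ _ Hmu _ _ _ _]. nra.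
Qed.

Lemma reduced_tan_M_le : (1 <= m)%nat -> tan M <= k.
Proof.
  intros Hm. pose proof (reduced_mu_ge_1 Hm). destruct Hsol as [_ _ TM _ _ _ _ _ _ _].
  pose proof reduced_tan_order. nra.
Qed.

Lemma reduced_quad_form_sub :
  quad_form mu nu - quad_form (INR m) (INR n) = 3 * robin_defect mu nu M N a / PI^2.
Proof.
  destruct Hsol as [Emu Enu _ _ _ _ _ _ _ _]. pose proof PI_bounds.
  apply quad_form_shift; [lra | exact Emu | exact Enu].
Qed.

Lemma reduced_pairing_bounds : 0 <= angle_pairing mu nu M N a <= 3*k.
Proof.
  destruct Hsol as [_ _ TM TN Ta Hmu Hmunu _ _ _].
  pose proof reduced_angle_bounds as Hang.
  destruct (tan_taylor_bounds M) as [HM _]; [lra|].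
  destruct (tan_taylor_bounds N) as [HN _]; [lra|].
  destruct (tan_taylor_bounds a) as [Ha _]; [lra|].
  unfold angle_pairing. split; nra.
Qed.

Lemma reduced_M_sq_le : M^2 <= PI * k.
Proof.
  destruct Hsol as [Emu _ TM _ _ Hmu _ _ _ _].
  pose proof reduced_angle_bounds. pose proof reduced_mu_ge. pose proof (pos_INR m).
  pose proof PI_bounds.
  destruct (tan_taylor_bounds M) as [HM _]; [lra|].
  assert (M <= PI * mu) by nra.
  assert (mu * M <= k) by nra.
  nra.
Qed.

Lemma reduced_quad_form_near : Rabs (quad_form mu nu - quad_form (INR m) (INR n)) <= 5*k.
Proof.
  rewrite reduced_quad_form_sub. pose proof PI_bounds.
  pose proof reduced_pairing_bounds. pose proof reduced_M_sq_le.
  pose proof reduced_angle_bounds.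
  assert (0 <= angle_energy M N a <= 5 * (PI * k)).
  { split; [apply angle_energy_nonneg|].
    enough (angle_energy M N a <= 5 * M^2) by lra.
    apply angle_energy_le; lra. }
  assert (Hdef : -5 * PI * k <= robin_defect mu nu M N a <= 3 * PI * k).
  { unfold robin_defect. split; nra. }
  apply Rabs_le.
  replace (3 * robin_defect mu nu M N a / PI^2) with (3 / PI * (robin_defect mu nu M N a / PI))
    by (field; lra).
  assert (-5 * k <= robin_defect mu nu M N a / PI <= 3 * k).
  { split; [apply Rmult_le_reg_r with PI | apply Rmult_le_reg_r with PI]; try lra;
      field_simplify; lra. }
  assert (0 < 3 / PI <= 1) by (split; [apply Rdiv_lt_0_compat | apply Rmult_le_reg_r with PI;
    [| field_simplify]]; lra).
  split; nra.
Qed.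

Lemma reduced_defect_m0 : m = 0%nat -> robin_defect mu nu M N a <= 3*PI*k - PI*k/12.
Proof.
  intros Hm0. pose proof Hsol as [Emu _ TM TN Ta Hmu Hmunu _ _ _].
  rewrite Hm0 in Emu. simpl INR in Emu.
  pose proof PI_bounds. pose proof reduced_angle_bounds.
  destruct (tan_taylor_bounds M) as [HM _]; [lra|].
  destruct (tan_taylor_bounds N) as [HN _]; [lra|].
  destruct (tan_taylor_bounds a) as [Ha _]; [lra|].
  assert (P1 : mu*M <= k) by nra.
  assert (P2 : nu*N <= k) by nra.
  assert (P3 : (mu+nu)*a <= k) by nra.
  assert (HE : M^2/2 <= angle_energy M N a).
  { rewrite angle_energy_sos. pose proof (pow2_ge_0 (M - N)). pose proof (pow2_ge_0 (N + a)).
    assert (M^2 <= (M + a)^2) by nra. lra. }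
  unfold robin_defect, angle_pairing.
  (* For m = 0 either M is small, and then so is mu M <= 2 M^2 / PI, or the energy M^2/2 is large. *)
  destruct (Rle_lt_dec (M^2) (PI*k/6)) as [Hs|Hs].
  - assert (PI*(mu*M) <= 2*M^2).
    { replace (PI*(mu*M)) with ((PI*mu)*M) by ring. rewrite Emu. nra. }
    nra.
  - nra.
Qed.

Lemma reduced_pairing_expansion :
  0 <= angle_pairing mu nu M N a - (3*k - k * sq_slopes k mu nu / 3) <= 3/5 * k * tan M ^ 4.
Proof.
  pose proof Hsol as [_ _ TM TN Ta Hmu Hmunu _ _ _].
  pose proof reduced_angle_bounds. pose proof reduced_slopes as (SM & SN & Sa).
  destruct (tan_taylor_bounds M) as [_ HM]; [lra|].
  destruct (tan_taylor_bounds N) as [_ HN]; [lra|].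
  destruct (tan_taylor_bounds a) as [_ Ha]; [lra|].
  pose proof (slope_term_bounds mu (tan M) M k Hmu TM HM).
  pose proof (slope_term_bounds nu (tan N) N k ltac:(lra) TN HN).
  pose proof (slope_term_bounds (mu + nu) (tan a) a k ltac:(lra) Ta Ha).
  pose proof reduced_tan_order. pose proof reduced_k_nonneg.
  assert (tan N ^ 4 <= tan M ^ 4) by (apply pow_incr; lra).
  assert (tan a ^ 4 <= tan M ^ 4) by (apply pow_incr; lra).
  unfold angle_pairing, sq_slopes. rewrite <- SM, <- SN, <- Sa.
  split; nra.
Qed.

Lemma reduced_sq_slopes_bounds : (1 <= m)%nat ->
  tan M ^ 2 <= sq_slopes k mu nu <= 3 * k^2.
Proof.
  intros Hm. pose proof reduced_tan_order. pose proof (reduced_tan_M_le Hm).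
  pose proof reduced_slopes as (SM & SN & Sa).
  unfold sq_slopes. rewrite <- SM, <- SN, <- Sa.
  nra.
Qed.

Lemma reduced_quad_le_cubic : (1 <= m)%nat -> quad_form mu nu <= 2 * cubic_form mu nu.
Proof.
  intros Hm. pose proof (reduced_mu_ge_1 Hm). destruct Hsol as [_ _ _ _ _ _ Hmunu _ _ _].
  unfold quad_form, cubic_form. nra.
Qed.

Hypothesis Hk : 0 < k <= 1/100.

Lemma reduced_energy_expansion : (1 <= m)%nat ->
  Rabs (angle_energy M N a - sq_slopes k mu nu) <= 5 * tan M ^ 4.
Proof.
  intros Hm. pose proof (reduced_mu_ge_1 Hm).
  pose proof Hsol as [_ _ _ _ _ Hmu Hmunu _ _ _].
  pose proof reduced_angle_bounds. pose proof reduced_slopes as (SM & SN & Sa).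
  destruct (tan_taylor_bounds M) as [HM1 HM2]; [lra|].
  destruct (tan_taylor_bounds N) as [HN1 HN2]; [lra|].
  destruct (tan_taylor_bounds a) as [Ha1 Ha2]; [lra|].
  pose proof reduced_tan_order. pose proof (reduced_tan_M_le Hm).
  assert (tan N ^ 3 <= tan M ^ 3) by (apply pow_incr; lra).
  assert (tan a ^ 3 <= tan M ^ 3) by (apply pow_incr; lra).
  rewrite <- (angle_energy_slopes k mu nu) by lra. rewrite <- SM, <- SN, <- Sa.
  replace M with (tan M - (tan M - M)) at 1 by ring.
  replace N with (tan N - (tan N - N)) at 1 by ring.
  replace a with (tan a - (tan a - a)) at 1 by ring.
  apply angle_energy_perturb; nra.
Qed.

Lemma reduced_defect_expansion : (1 <= m)%nat ->
  Rabs (robin_defect mu nu M N a - (3*PI*k - (1 + PI*k/3) * sq_slopes k mu nu))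
    <= 6 * sq_slopes k mu nu ^ 2.
Proof.
  intros Hm. pose proof PI_bounds.
  pose proof reduced_pairing_expansion as HP.
  pose proof (reduced_energy_expansion Hm) as HE.
  pose proof (reduced_sq_slopes_bounds Hm) as [HS _].
  assert (Ht4 : tan M ^ 4 <= sq_slopes k mu nu ^ 2).
  { replace (tan M ^ 4) with ((tan M ^ 2) ^ 2) by ring. apply pow_incr.
    split; [apply pow2_ge_0 | exact HS]. }
  assert (HPk : PI * k <= 4/100) by nra.
  replace (robin_defect mu nu M N a - (3*PI*k - (1 + PI*k/3) * sq_slopes k mu nu)) with
    (PI * (angle_pairing mu nu M N a - (3*k - k * sq_slopes k mu nu / 3))
     - (angle_energy M N a - sq_slopes k mu nu)) by (unfold robin_defect; field).
  apply Rabs_le_inv in HE.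
  assert (PI * (3/5 * k * tan M ^ 4) <= tan M ^ 4).
  { replace (PI * (3/5 * k * tan M ^ 4)) with (3/5 * (PI * k) * tan M ^ 4) by ring.
    pose proof (pow2_ge_0 (tan M ^ 2)). replace (tan M ^ 4) with ((tan M ^ 2)^2) by ring. nra. }
  apply Rabs_le. nra.
Qed.

Lemma reduced_defect_gt : (1 <= m)%nat -> 3*PI*k - PI*k/12 < robin_defect mu nu M N a.
Proof.
  intros Hm. pose proof PI_bounds.
  pose proof (reduced_defect_expansion Hm) as HE. apply Rabs_le_inv in HE.
  pose proof (reduced_sq_slopes_bounds Hm) as [HS0 HS].
  set (S := sq_slopes k mu nu) in *.
  assert (0 <= S) by (pose proof (pow2_ge_0 (tan M)); lra).
  assert (HPk : 0 < PI * k <= 4/100) by (split; nra).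
  assert ((1 + PI*k/3) * S <= 2 * (3 * k^2)) by nra.
  assert (S^2 <= 9 * k^4) by (replace (9 * k^4) with ((3 * k^2)^2) by ring; apply pow_incr; lra).
  assert (k^3 <= (1/100)^3) by (apply pow_incr; lra).
  assert (k^4 <= k / 1000000) by nra.
  nra.
Qed.

Lemma reduced_cubic_near : (1 <= m)%nat ->
  Rabs (cubic_form mu nu - cubic_form (INR m) (INR n)) <= quad_form (INR m) (INR n) / 2.
Proof.
  intros Hm. pose proof PI_bounds. pose proof (reduced_tan_M_le Hm).
  pose proof Hsol as [Emu Enu _ _ _ _ _ _ _ _]. pose proof reduced_angle_bounds.
  destruct (tan_taylor_bounds M) as [HM _]; [lra|].
  assert (HmR : 1 <= INR m) by (apply (le_INR 1); exact Hm).
  assert (Hmn : INR m <= INR n).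
  { pose proof reduced_mu_ge. destruct Hsol as [_ _ _ _ _ _ Hmunu _ _ _]. nra. }
  replace (cubic_form mu nu) with (cubic_form (INR m + (mu - INR m)) (INR n + (nu - INR n)))
    by (f_equal; ring).
  apply (cubic_form_perturb _ _ _ _ k); [lra | | | lra]; split; nra.
Qed.

End ReducedSolution.

Lemma robin_reduced_cubic_gap_absurd k m n m' n' mu nu M N a mu' nu' M' N' a' :
  0 < k <= 1/100 -> (1 <= m)%nat -> (1 <= m')%nat ->
  robin_reduced k m n mu nu M N a -> robin_reduced k m' n' mu' nu' M' N' a' ->
  quad_form mu nu = quad_form mu' nu' ->
  quad_form (INR m) (INR n) = quad_form (INR m') (INR n') ->
  robin_defect mu nu M N a = robin_defect mu' nu' M' N' a' ->
  cubic_form (INR m) (INR n) + 2 * quad_form (INR m) (INR n) <= cubic_form (INR m') (INR n') ->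
  False.
Proof.
  intros Hk Hm Hm' Hsol Hsol' HQ HQ0 HU HZ.
  pose proof (reduced_mu_ge_1 Hsol Hm). pose proof (reduced_mu_ge_1 Hsol' Hm').
  pose proof (reduced_mu_pos Hsol') as Hmu'. pose proof (reduced_mu_le_nu Hsol').
  pose proof (reduced_mu_le_nu Hsol).
  assert (HS : Rabs (sq_slopes k mu nu - sq_slopes k mu' nu')
               <= 6 * (sq_slopes k mu nu ^ 2 + sq_slopes k mu' nu' ^ 2)).
  { pose proof (reduced_defect_expansion Hsol Hk Hm) as E1.
    pose proof (reduced_defect_expansion Hsol' Hk Hm') as E2.
    rewrite HU in E1. rewrite Rmult_plus_distr_l.
    eapply Rabs_sub_le_of_common_affine; [|exact E1|exact E2]. pose proof PI_bounds. nra. }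
  rewrite !sq_slopes_quad_cubic, <- HQ in HS by lra.
  pose proof (reduced_quad_form_near Hsol) as HQnear. apply Rabs_le_inv in HQnear.
  pose proof (reduced_cubic_near Hsol Hk Hm) as HW. apply Rabs_le_inv in HW.
  pose proof (reduced_cubic_near Hsol' Hk Hm') as HW'. apply Rabs_le_inv in HW'.
  rewrite <- HQ0 in HW'.
  assert (HQ01 : 1 <= quad_form (INR m) (INR n)).
  { apply (le_INR 1) in Hm. pose proof (pos_INR n). unfold quad_form. simpl INR in Hm. nra. }
  assert (Hgap := sq_slopes_gap k (quad_form mu nu) (quad_form (INR m) (INR n))
            (cubic_form mu nu) (cubic_form mu' nu') Hk HQ01
            ltac:(split; [unfold quad_form; nra | lra])
            (reduced_quad_le_cubic Hsol Hm) ltac:(lra)).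
  apply Rabs_le_inv in HS. lra.
Qed.

Lemma robin_reduced_unique k m n m' n' mu nu M N a mu' nu' M' N' a' :
  0 < k <= 1/100 -> (m <= n)%nat -> (m' <= n')%nat ->
  robin_reduced k m n mu nu M N a -> robin_reduced k m' n' mu' nu' M' N' a' ->
  quad_form mu nu = quad_form mu' nu' -> (m, n) = (m', n').
Proof.
  intros Hk Hmn Hmn' Hsol Hsol' HQ.
  assert (HQ0 : (m*m + m*n + n*n = m'*m' + m'*n' + n'*n')%nat).
  { apply INR_eq_of_dist_lt_1. rewrite <- !quad_form_INR.
    pose proof (reduced_quad_form_near Hsol) as H1. pose proof (reduced_quad_form_near Hsol') as H2.
    rewrite <- HQ in H2. apply Rabs_le_inv in H1, H2. apply Rabs_def1; lra. }
  assert (HQ0R : quad_form (INR m) (INR n) = quad_form (INR m') (INR n'))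
    by (rewrite !quad_form_INR, HQ0; reflexivity).
  assert (HU : robin_defect mu nu M N a = robin_defect mu' nu' M' N' a').
  { pose proof (reduced_quad_form_sub Hsol) as H1. pose proof (reduced_quad_form_sub Hsol') as H2.
    rewrite <- HQ, <- HQ0R, H1 in H2. pose proof PI_bounds.
    apply (Rmult_eq_reg_l (3 / PI^2)); [|apply Rgt_not_eq, Rdiv_lt_0_compat; nra].
    unfold Rdiv in *. lra. }
  destruct (Nat.eq_dec m 0) as [Hm|Hm]; destruct (Nat.eq_dec m' 0) as [Hm'|Hm'].
  - subst m m'. f_equal. nia.
  - pose proof (reduced_defect_m0 Hsol Hm). pose proof (reduced_defect_gt Hsol' Hk ltac:(lia)).
    lra.
  - pose proof (reduced_defect_m0 Hsol' Hm'). pose proof (reduced_defect_gt Hsol Hk ltac:(lia)).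
    lra.
  - assert (Hm1 : (1 <= m)%nat) by lia. assert (Hm1' : (1 <= m')%nat) by lia.
    enough (Hne : (m, n) <> (m', n') -> False).
    { destruct (Nat.eq_dec m m') as [<-|]; destruct (Nat.eq_dec n n') as [<-|];
        [reflexivity | exfalso; apply Hne; congruence ..]. }
    intros Hne.
    destruct (cubic_gap_of_same_quad m n m' n' Hmn Hmn' Hne HQ0) as [Hz|Hz];
      apply le_INR in Hz; rewrite plus_INR, (mult_INR 2), <- !cubic_form_INR, <- quad_form_INR in Hz;
      replace (INR 2) with 2 in Hz by (simpl; lra).
    + exact (robin_reduced_cubic_gap_absurd Hk Hm1 Hm1' Hsol Hsol' HQ HQ0R HU Hz).
    + rewrite HQ0R in Hz.
      exact (robin_reduced_cubic_gap_absurd Hk Hm1' Hm1 Hsol' Hsol (eq_sym HQ) (eq_sym HQ0R)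
               (eq_sym HU) Hz).
Qed.

Lemma robin_Lambda_quad_form r m n L M N :
  robin_Lambda r m n L M N = 4 * PI^2 / (27 * r^2) * quad_form (robin_mu m L M N) (robin_nu n L M N).
Proof. reflexivity. Qed.

Lemma robin_k_small r sigma : 0 < r -> 0 < sigma < PI / (300 * r) ->
  0 < 3 * r * sigma / PI <= 1/100.
Proof.
  intros Hr Hsigma. pose proof PI_bounds.
  split; [apply Rdiv_lt_0_compat; nra|].
  assert (r * sigma < PI / 300).
  { replace (PI / 300) with (r * (PI / (300 * r))) by (field; lra).
    apply Rmult_lt_compat_l; lra. }
  apply Rmult_le_reg_r with PI; [lra|].
  replace (3 * r * sigma / PI * PI) with (3 * (r * sigma)) by (field; lra). lra.
Qed.

Theorem theorem1p5 (r : R) (hr : 0 < r) :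
  exists sigma0 : R, 0 < sigma0 /\
    forall sigma : R, 0 < sigma < sigma0 ->
    forall m n m' n' : nat, (m <= n)%nat -> (m' <= n')%nat -> (m, n) <> (m', n') ->
    forall L M N L' M' N' : R,
      robin_sys r sigma m n L M N ->
      robin_sys r sigma m' n' L' M' N' ->
      robin_Lambda r m n L M N <> robin_Lambda r m' n' L' M' N'.
Proof.
  pose proof PI_bounds.
  exists (PI / (300 * r)). split; [apply Rdiv_lt_0_compat; lra|].
  intros sigma Hsigma m n m' n' Hmn Hmn' Hne L M N L' M' N' Hsys Hsys' HLambda.
  pose proof (robin_k_small hr Hsigma) as Hk.
  apply Hne. apply (robin_reduced_unique Hk Hmn Hmn'
    (robin_sys_reduced hr (proj1 Hsigma) Hmn Hsys) (robin_sys_reduced hr (proj1 Hsigma) Hmn' Hsys')).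
  rewrite !robin_Lambda_quad_form in HLambda.
  apply Rmult_eq_reg_l in HLambda; [exact HLambda|].
  apply Rgt_not_eq, Rdiv_lt_0_compat; nra.
Qed.
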